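(* Let $\rho$ be a valid state of an $(m,n)$-composite, and consider a sub-collection consisting of $m'\le m$ of its dits and $n'\le n$ of its anti-dits (an $(m',n')$-composite). Let $P$ be any operator belonging to a valid measurement on this $(m',n')$-composite. Then the operator $\sigma=\mathrm{Tr}_{\text{measured}}\big[(P\otimes I)\rho\big]$ on the remaining $m-m'$ dits and $n-n'$ anti-dits (where the partial trace is over the measured $m'$ dits and $n'$ anti-dits and $I$ is the identity on the remaining systems) is either zero or a positive multiple of a valid state of the remaining $(m-m',n-n')$-composite. In particular (taking $P=I$), every marginal of a valid state is a valid state.
   Context: Fix an integer $d\ge 2$. A dit $D$ and an anti-dit $A$ are each associated with $\mathbb C^d$ with computational orthonormal basis $\{|0\rangle,\dots,|d-1\rangle\}$; $\oplus$ denotes addition modulo $d$. An $(m,n)$-composite consists of $m$ dits $D_1,\dots,D_m$ and $n$ anti-dits $A_1,\dots,A_n$, with Hilbert space $(\mathbb C^d)^{\otimes m}\otimes(\mathbb C^d)^{\otimes n}$. For a dit $D_i$, an anti-dit $A_j$ and $k\in\{0,\dots,d-1\}$, let $\Pi_k^{D_iA_j}$ be the orthogonal projector onto $\mathrm{span}\{|s\rangle_{D_i}|s\oplus k\rangle_{A_j}: s=0,\dots,d-1\}$. Pure states: if $m\le n$, a pure state of the $(m,n)$-composite is a unit vector of the form $(U\otimes W)(|\Psi'\rangle\otimes|\mathbf r\rangle)$, where $U$ is a unitary permuting the tensor factors of the $m$ dits, $W$ a unitary permuting the tensor factors of the $n$ anti-dits, $|\mathbf r\rangle$ a computational-basis product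 vector of anti-dits $A_{m+1},\dots,A_n$, and $|\Psi'\rangle$ a unit vector of $D_1\cdots D_mA_1\cdots A_m$ with $(\Pi_{k_1}^{D_1A_1}\otimes\cdots\otimes\Pi_{k_m}^{D_mA_m})|\Psi'\rangle=|\Psi'\rangle$ for some $k_1,\dots,k_m$. If $m\ge n$, the same with roles of dits and anti-dits exchanged (a computational-basis product vector on the $m-n$ extra dits). The $(0,0)$-composite is the trivial system $\mathbb C$. Valid states are density matrices that are finite convex combinations of projectors onto pure states. A valid measurement on an $(m,n)$-composite is a POVM $\{P_i\}$ ($P_i\ge 0$, $\sum_iP_i=I$) in which each $P_i$ is a linear combination with nonnegative coefficients of projectors $|\Psi\rangle\langle\Psi|$ onto pure states of that composite; outcome probabilities are $\mathrm{Tr}[P_i\rho]$. *)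

From mathcomp Require Import all_boot all_order all_algebra all_fingroup all_field.
Set Implicit Arguments. Unset Strict Implicit. Unset Printing Implicit Defensive.
Import Order.TTheory GRing.Theory Num.Theory.
Local Open Scope ring_scope.

(* Computational basis of an (m,n)-composite of dits/anti-dits of dimension d:
   a basis label is a pair (s, a) with s i = value of dit D_(i+1) and
   a j = value of anti-dit A_(j+1). *)
Notation basis d m n := ({ffun 'I_m -> 'I_d} * {ffun 'I_n -> 'I_d})%type.

Definition vec (d m n : nat) := basis d m n -> algC.
Definition op (d m n : nat) := basis d m n -> basis d m n -> algC.

Definition unit_vec d m n (v : vec d m n) : Prop := \sum_(z : basis d m n) `|v z| ^+ 2 = 1.

Definition apply_op d m n (A : op d m n) (v : vec d m n) : vec d m n :=
  fun z => \sum_(w : basis d m n) A z w * v w.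

Definition mulop d m n (A B : op d m n) : op d m n :=
  fun z w => \sum_(u : basis d m n) A z u * B u w.

Definition outer d m n (v : vec d m n) : op d m n := fun z w => v z * (v w)^*.

Definition psd d m n (A : op d m n) : Prop :=
  forall v : vec d m n, 0 <= \sum_(z : basis d m n) \sum_(w : basis d m n) (v z)^* * A z w * v w.

(* Pi_k^{DA} on C^d (x) C^d, matrix entry <s,a| Pi_k |s',a'>:
   projector onto span{ |s>|s (+) k> }. *)
Definition Pi1 (d : nat) (k : 'I_d) (s a s' a' : 'I_d) : algC :=
  ((s == s') && (a == a') && (val a == (val s + val k) %% d)%N)%:R.

Definition pair_proj d p (k : 'I_p -> 'I_d) : op d p p :=
  fun z w => \prod_(i < p) Pi1 (k i) (z.1 i) (z.2 i) (w.1 i) (w.2 i).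

(* (U (x) W) v, U permuting dit factors by sigma, W anti-dit factors by tau. *)
Definition permvec d m n (sigma : 'S_m) (tau : 'S_n) (v : vec d m n) : vec d m n :=
  fun z => v ([ffun i => z.1 (sigma i)], [ffun j => z.2 (tau j)]).

(* Psi' (x) |r> : Psi' on D_1..D_p A_1..A_p (p = min m n), the remaining
   (dits or anti-dits, whichever are in excess) in computational basis states
   rD / rA (only the values at indices >= p are used). *)
Definition extend_basis d m n (Phi : vec d (minn m n) (minn m n))
    (rD : 'I_m -> 'I_d) (rA : 'I_n -> 'I_d) : vec d m n :=
  fun w => Phi ([ffun i => w.1 (widen_ord (geq_minl m n) i)],
                [ffun j => w.2 (widen_ord (geq_minr m n) j)])
           * ([forall i : 'I_m, (minn m n <= i)%N ==> (w.1 i == rD i)] &&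
              [forall j : 'I_n, (minn m n <= j)%N ==> (w.2 j == rA j)])%:R.

Definition is_pure d m n (psi : vec d m n) : Prop :=
  unit_vec psi /\
  exists (sigma : 'S_m) (tau : 'S_n) (k : 'I_(minn m n) -> 'I_d)
         (Phi : vec d (minn m n) (minn m n)) (rD : 'I_m -> 'I_d) (rA : 'I_n -> 'I_d),
    (forall z, apply_op (pair_proj k) Phi z = Phi z) /\
    (forall z, psi z = permvec sigma tau (extend_basis Phi rD rA) z).

Definition valid_state d m n (rho : op d m n) : Prop :=
  exists (N : nat) (w : 'I_N -> algC) (psi : 'I_N -> vec d m n),
    (forall i, 0 <= w i) /\ \sum_(i < N) w i = 1 /\ (forall i, is_pure (psi i)) /\
    (forall z z', rho z z' = \sum_(i < N) w i * outer (psi i) z z').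

Definition in_pure_cone d m n (P : op d m n) : Prop :=
  exists (M : nat) (c : 'I_M -> algC) (psi : 'I_M -> vec d m n),
    (forall j, 0 <= c j) /\ (forall j, is_pure (psi j)) /\
    (forall z z', P z z' = \sum_(j < M) c j * outer (psi j) z z').

Definition valid_measurement d m n (N : nat) (Ps : 'I_N -> op d m n) : Prop :=
  (forall i, psd (Ps i)) /\
  (forall z z', \sum_(i < N) Ps i z z' = (z == z')%:R) /\
  (forall i, in_pure_cone (Ps i)).

Definition measurement_element d m n (P : op d m n) : Prop :=
  exists (N : nat) (Ps : 'I_N -> op d m n) (i : 'I_N),
    valid_measurement Ps /\ (forall z z', P z z' = Ps i z z').

Definition restr d m n m1 n1 (eD : 'I_m1 -> 'I_m) (eA : 'I_n1 -> 'I_n)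
    (z : basis d m n) : basis d m1 n1 :=
  ([ffun i => z.1 (eD i)], [ffun j => z.2 (eA j)]).

Definition tensor_id d m n m1 n1 m2 n2 (P : op d m1 n1)
    (eD : 'I_m1 -> 'I_m) (eA : 'I_n1 -> 'I_n) (cD : 'I_m2 -> 'I_m) (cA : 'I_n2 -> 'I_n)
    : op d m n :=
  fun z u => P (restr eD eA z) (restr eD eA u) * (restr cD cA z == restr cD cA u)%:R.

Definition ptrace d m n m1 n1 m2 n2 (X : op d m n)
    (eD : 'I_m1 -> 'I_m) (eA : 'I_n1 -> 'I_n) (cD : 'I_m2 -> 'I_m) (cA : 'I_n2 -> 'I_n)
    : op d m2 n2 :=
  fun y y' => \sum_(z : basis d m n) \sum_(w : basis d m n)
     ((restr cD cA z == y) && (restr cD cA w == y') && (restr eD eA z == restr eD eA w))%:R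
     * X z w.

(* The support of a pure state is the solution set of a pattern of constraints over
   Z/dZ: some dits are paired with distinct anti-dits with prescribed differences of
   values, and all other dits and anti-dits have prescribed values; conversely, every
   unit vector supported on such a solution set is a pure state.  Writing
   P = sum_j c_j |phi_j><phi_j| and rho = sum_i w_i |psi_i><psi_i|, the operator sigma
   is sum_(i,j) w_i c_j |chi_ij><chi_ij|, where chi_ij contracts psi_i with the
   conjugate of phi_j over the measured systems.  Eliminating the measured variables one
   at a time from the patterns of psi_i and phi_j leaves a pattern on the remaining
   systems that supports chi_ij, so normalising the chi_ij exhibits sigma as its trace
   times a convex combination of pure states.  The marginal is the case
   P = I = sum_x |x><x|, and its trace is that of rho, namely 1. *)

From mathcomp Require Import all_boot all_order all_algebra all_fingroup all_field.
From mathcomp Require Import ring.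
Set Implicit Arguments. Unset Strict Implicit. Unset Printing Implicit Defensive.
Import Order.TTheory GRing.Theory Num.Theory.
Local Open Scope ring_scope.

Lemma predD1_predD1 (T : eqType) (U M : pred T) (x : T) :
  M x -> predD (predD U (pred1 x)) (predD M (pred1 x)) =1 predD U M.
Proof. by move=> hx y /=; case: eqP => // ->; rewrite hx. Qed.

Lemma subset_predD1 (T : eqType) (U M : pred T) (x : T) :
  {subset M <= U} -> {subset predD M (pred1 x) <= predD U (pred1 x)}.
Proof. by move=> s y; rewrite !inE /= => /andP[-> /s]. Qed.

Lemma card_predD1 (T : finType) (A : pred T) x : A x -> (#|predD A (pred1 x)| < #|A|)%N.
Proof.
move=> Ax; rewrite (cardD1 x A) -[x \in A]/(A x) Ax add1n ltnS; apply: subset_leq_card.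
by apply/subsetP => y; rewrite !inE /= andbC.
Qed.

Section Pattern.
Variables (G : zmodType) (Dt At : finType).
Implicit Types (UD : pred Dt) (UA : pred At).

(* The constraints on a configuration [z] of the dits [Dt] and anti-dits [At]:
   [z.2 j = z.1 i + dval P i] if [mate P i = Some j], [z.1 i = dval P i] for an
   unmated dit, and [z.2 j = aval P j] for an anti-dit that is nobody's mate. *)
Record pattern := Pattern { mate : Dt -> option At; dval : Dt -> G; aval : At -> G }.
Implicit Types (P Q : pattern).

Definition pattern_wf UD UA P : Prop :=
  (forall i j, UD i -> mate P i = Some j -> UA j) /\
  (forall i i' j, UD i -> UD i' -> mate P i = Some j -> mate P i' = Some j -> i = i').

Definition fits UD UA P (z : (Dt -> G) * (At -> G)) : Prop :=
  (forall i, UD i ->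
     if mate P i is Some j then z.2 j = z.1 i + dval P i else z.1 i = dval P i) /\
  (forall j, UA j -> (forall i, UD i -> mate P i <> Some j) -> z.2 j = aval P j).

Lemma eq_pattern_wf UD UD' UA UA' P :
  UD =1 UD' -> UA =1 UA' -> pattern_wf UD UA P -> pattern_wf UD' UA' P.
Proof.
move=> eD eA [h1 h2]; split; first by move=> i j; rewrite -eD -eA; apply: h1.
by move=> i i' j; rewrite -!eD; apply: h2.
Qed.

Lemma eq_fits UD UD' UA UA' P z :
  UD =1 UD' -> UA =1 UA' -> fits UD UA P z -> fits UD' UA' P z.
Proof.
move=> eD eA [h1 h2]; split; first by move=> i; rewrite -eD; apply: h1.
move=> j; rewrite -eA => uj hj; apply: h2 => // i; rewrite eD; apply: hj.
Qed.

Lemma fits_ext UD UA P z z' : fits UD UA P z ->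
  (forall i, z.1 i = z'.1 i) -> (forall j, z.2 j = z'.2 j) -> fits UD UA P z'.
Proof.
move=> [g1 g2] e1 e2; split.
  by move=> i u; have := g1 i u; rewrite -!e1; case: (mate P i) => [j|]; rewrite ?e2.
by move=> j u h; rewrite -e2; apply: g2.
Qed.

Definition fix_dit Q (i : Dt) (c : G) : pattern :=
  Pattern (mate Q) (dval Q) (fun j => if mate Q i == Some j then c + dval Q i else aval Q j).

Lemma fix_dit_wf UD UA Q i c :
  pattern_wf UD UA Q -> pattern_wf (predD UD (pred1 i)) UA (fix_dit Q i c).
Proof.
move=> [h1 h2]; split => /=; first by move=> i0 j /andP[_ u] e; apply: h1 e.
by move=> i0 i1 j /andP[_ u0] /andP[_ u1]; apply: h2.
Qed.

Lemma fix_dit_fits UD UA Q i c z : UD i -> fits UD UA Q z -> z.1 i = c ->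
  fits (predD UD (pred1 i)) UA (fix_dit Q i c) z.
Proof.
move=> ui [h1 h2] zi; split => /=; first by move=> i0 /andP[_ u]; apply: h1.
move=> j uj hj; case: eqP => e; first by have := h1 i ui; rewrite e => ->; rewrite zi.
apply: h2 => // i0 u0 e0; case: (eqVneq i0 i) => [ei|ne]; first by apply: e; rewrite -ei.
by apply: (hj i0) => //; rewrite /= ne.
Qed.

Definition fix_antidit Q (j : At) (c : G) : pattern :=
  Pattern (fun i => if mate Q i == Some j then None else mate Q i)
          (fun i => if mate Q i == Some j then c - dval Q i else dval Q i) (aval Q).

Lemma fix_antidit_wf UD UA Q j c :
  pattern_wf UD UA Q -> pattern_wf UD (predD UA (pred1 j)) (fix_antidit Q j c).
Proof.
move=> [h1 h2]; split => /=.
  move=> i j0 u; case: eqP => // ne e; rewrite /= (h1 _ _ u e) andbT.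
  by apply/eqP => ej; apply: ne; rewrite e ej.
move=> i i' j0 u u'; case: eqP => // _ e; case: eqP => // _ e'.
exact: h2 e e'.
Qed.

Lemma fix_antidit_fits UD UA Q j c z : UA j -> fits UD UA Q z -> z.2 j = c ->
  fits UD (predD UA (pred1 j)) (fix_antidit Q j c) z.
Proof.
move=> uj [h1 h2] zj; split => /=.
  move=> i u; have := h1 i u; case: eqP => [->|//] e.
  by rewrite -zj e addrK.
move=> j0 /andP[nj u0] hj; apply: h2 => // i u e.
apply: (hj i u); rewrite e; case: eqP => // [[ej]].
by move: nj; rewrite /= ej eqxx.
Qed.

(* Dit [i] and anti-dit [j] are removed, using the relation [z.2 j = z.1 i + k]. *)
Definition link Q (i : Dt) (j : At) (k : G) : pattern :=
  Pattern (fun x => if mate Q x == Some j then mate Q i else mate Q x)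
    (fun x => if mate Q x == Some j then
                (if mate Q i is Some _ then dval Q x - k + dval Q i
                 else dval Q i + k - dval Q x)
              else dval Q x)
    (fun y => if mate Q i == Some y then aval Q j - k + dval Q i else aval Q y).

Lemma link_wf UD UA Q i j k : UD i -> pattern_wf UD UA Q ->
  pattern_wf (predD UD (pred1 i)) (predD UA (pred1 j)) (link Q i j k).
Proof.
move=> ui [h1 h2]; split => /=.
  move=> x y /andP[nx ux]; case: eqP => [ex ei|ne e].
    rewrite (h1 _ _ ui ei) andbT; apply/eqP => ey; move: ei; rewrite ey => ei.
    by move: nx; rewrite /= (h2 _ _ _ ux ui ex ei) eqxx.
  rewrite (h1 _ _ ux e) andbT; apply/eqP => ey; apply: ne; by rewrite e ey.
move=> x x' y /andP[nx ux] /andP[nx' ux'].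
case: eqP => [ex|nex]; case: eqP => [ex'|nex'].
- by move=> _ _; apply: h2 ex ex'.
- by move=> ei e'; move: nx'; rewrite /= (h2 _ _ _ ux' ui e' ei) eqxx.
- by move=> e ei; move: nx; rewrite /= (h2 _ _ _ ux ui e ei) eqxx.
- exact: h2.
Qed.

Lemma link_fits UD UA Q i j k z : UD i -> UA j -> pattern_wf UD UA Q ->
  fits UD UA Q z -> z.2 j = z.1 i + k ->
  fits (predD UD (pred1 i)) (predD UA (pred1 j)) (link Q i j k) z.
Proof.
move=> ui uj [w1 w2] [h1 h2] zij; split => /=.
  move=> x /andP[nx ux]; have := h1 x ux; case: eqP => [->|//] hx.
  have := h1 i ui; case: (mate Q i) => [y|] hi.
    rewrite hi (_ : z.1 i = z.1 x + dval Q x - k); last by rewrite -hx zij addrK.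
    by rewrite !addrA.
  by rewrite -hi -zij hx addrK.
move=> y /andP[ny uy] hy; case: eqP => [ei|ne].
  have := h1 i ui; rewrite ei => ->.
  have -> : z.1 i = z.2 j - k by rewrite zij addrK.
  congr (_ - _ + _); apply: h2 => // x ux ex.
  case: (eqVneq x i) => [exi|nxi].
    by move: ei; rewrite -exi ex => -[e]; move: ny; rewrite /= e eqxx.
  by apply: (hy x); rewrite /= ?nxi // ex eqxx.
apply: h2 => // x ux ex; case: (eqVneq x i) => [exi|nxi]; first by apply: ne; rewrite -exi ex.
apply: (hy x); first by rewrite /= nxi.
by case: eqP => [e|_ //]; move: ex; rewrite e => -[e']; move: ny; rewrite /= e' eqxx.
Qed.

End Pattern.

Section Elimination.
Variables (G : zmodType) (Dt At : finType) (R : pattern G Dt At).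
Implicit Types (UD MD : pred Dt) (UA MA : pred At) (Q : pattern G Dt At).

(* [R] constrains the variables [MD], [MA] to be eliminated from the constraints
   [Q] on the variables [UD], [UA]. *)
Definition eliminable MD MA UD UA Q : Prop :=
  exists Q' : pattern G Dt At, pattern_wf (predD UD MD) (predD UA MA) Q' /\
    forall z, fits MD MA R z -> fits UD UA Q z -> fits (predD UD MD) (predD UA MA) Q' z.

Lemma eliminable0 MD MA UD UA Q : MD =1 pred0 -> MA =1 pred0 ->
  pattern_wf UD UA Q -> eliminable MD MA UD UA Q.
Proof.
move=> D0 A0 wQ; have eU : predD UD MD =1 UD by move=> x; rewrite /= D0.
have eA : predD UA MA =1 UA by move=> x; rewrite /= A0.
exists Q; split; first by apply: eq_pattern_wf wQ => x; rewrite ?eU ?eA.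
by move=> z _ g; apply: eq_fits g => x; rewrite ?eU ?eA.
Qed.

Lemma pattern_wf_link MD MA i j : pattern_wf MD MA R -> MD i -> mate R i = Some j ->
  pattern_wf (predD MD (pred1 i)) (predD MA (pred1 j)) R.
Proof.
move=> [h1 h2] Mi eR; split; last by move=> x x' y /andP[_ a] /andP[_ b]; apply: h2.
move=> x y /andP[nx Mx] e; rewrite /= (h1 _ _ Mx e) andbT; apply/eqP => ey.
by move: e nx; rewrite ey => e; rewrite /= (h2 _ _ _ Mx Mi e eR) eqxx.
Qed.

Lemma eliminable_link MD MA UD UA Q i j :
  {subset MD <= UD} -> {subset MA <= UA} -> pattern_wf MD MA R -> pattern_wf UD UA Q ->
  MD i -> mate R i = Some j ->
  eliminable (predD MD (pred1 i)) (predD MA (pred1 j)) (predD UD (pred1 i))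
    (predD UA (pred1 j)) (link Q i j (dval R i)) ->
  eliminable MD MA UD UA Q.
Proof.
move=> sD sA wR wQ Mi eR [Q' [wQ' hQ']].
have Mj : MA j by case: wR => h _; apply: h eR.
have eU := predD1_predD1 UD Mi; have eA := predD1_predD1 UA Mj.
exists Q'; split=> [|z [g1 g2] gQ]; first exact: eq_pattern_wf wQ'.
apply: eq_fits eU eA _; apply: hQ'; last first.
  by apply: link_fits => //; [apply: sD | apply: sA | have := g1 i Mi; rewrite eR].
split=> [x /andP[_ Mx]|y /andP[ny My] hy]; first exact: g1.
apply: g2 => // x Mx e; case: (eqVneq x i) => [exi|nxi].
  by move: e ny; rewrite exi eR => -[->]; rewrite /= eqxx.
by apply: (hy x); rewrite /= ?nxi.
Qed.

Lemma eliminable_fix_dit MD MA UD UA Q i :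
  {subset MD <= UD} -> MD i -> mate R i = None ->
  eliminable (predD MD (pred1 i)) MA (predD UD (pred1 i)) UA (fix_dit Q i (dval R i)) ->
  eliminable MD MA UD UA Q.
Proof.
move=> sD Mi eR [Q' [wQ' hQ']]; have eU := predD1_predD1 UD Mi.
exists Q'; split=> [|z [g1 g2] gQ]; first exact: eq_pattern_wf wQ'.
apply: eq_fits eU (frefl _) _; apply: hQ'; last first.
  by apply: fix_dit_fits => //; [apply: sD | have := g1 i Mi; rewrite eR].
split=> [x /andP[_ Mx]|y My hy]; first exact: g1.
apply: g2 => // x Mx e; case: (eqVneq x i) => [exi|nxi]; first by move: e; rewrite exi eR.
by apply: (hy x); rewrite /= ?nxi.
Qed.

Lemma eliminable_fix_antidit MD MA UD UA Q j :
  {subset MA <= UA} -> MD =1 pred0 -> MA j ->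
  eliminable MD (predD MA (pred1 j)) UD (predD UA (pred1 j)) (fix_antidit Q j (aval R j)) ->
  eliminable MD MA UD UA Q.
Proof.
move=> sA D0 Mj [Q' [wQ' hQ']]; have eA := predD1_predD1 UA Mj.
exists Q'; split=> [|z [g1 g2] gQ]; first exact: eq_pattern_wf wQ'.
apply: eq_fits (frefl _) eA _; apply: hQ'; last first.
  by apply: fix_antidit_fits => //; [apply: sA | apply: g2 => // x; rewrite D0].
by split=> [x|y /andP[_ My] hy]; [rewrite D0 | apply: g2].
Qed.

Theorem pattern_eliminable MD MA UD UA Q :
  {subset MD <= UD} -> {subset MA <= UA} -> pattern_wf MD MA R -> pattern_wf UD UA Q ->
  eliminable MD MA UD UA Q.
Proof.
move: {2}(#|MD| + #|MA|)%N (leqnn (#|MD| + #|MA|)) => N.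
elim: N MD MA UD UA Q => [|N IH] MD MA UD UA Q hN sD sA wR wQ.
  apply: eliminable0 => // x; apply/negP => h; move: hN.
    by rewrite (cardD1 x MD) -[x \in MD]/(MD x) h.
  by rewrite addnC (cardD1 x MA) -[x \in MA]/(MA x) h.
case: (pickP MD) => [i Mi|D0].
  case eR: (mate R i) => [j|].
    have Mj : MA j by case: wR => h _; apply: h eR.
    apply: (eliminable_link sD sA wR wQ Mi eR); apply: IH.
    - rewrite -ltnS; apply: leq_trans hN; rewrite -addSn leq_add ?card_predD1 //.
      exact: ltnW (card_predD1 Mj).
    - exact: subset_predD1.
    - exact: subset_predD1.
    - exact: pattern_wf_link.
    - by apply: link_wf wQ; apply: sD.
  apply: (eliminable_fix_dit sD Mi eR); apply: IH.
  - by rewrite -ltnS; apply: leq_trans hN; rewrite -addSn leq_add ?card_predD1.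
  - exact: subset_predD1.
  - exact: sA.
  - case: wR => h1 h2; split=> [x y /andP[_ Mx]|x x' y /andP[_ Mx] /andP[_ Mx']].
      exact: h1 Mx.
    exact: h2 Mx Mx'.
  - exact: fix_dit_wf.
case: (pickP MA) => [j Mj|A0]; last exact: eliminable0.
apply: (eliminable_fix_antidit sA D0 Mj); apply: IH.
- by rewrite -ltnS; apply: leq_trans hN; rewrite -addnS leq_add ?card_predD1.
- exact: sD.
- exact: subset_predD1.
- by split=> [x y hx|x x' y hx]; move: (D0 x); rewrite /= hx.
- exact: fix_antidit_wf.
Qed.

End Elimination.

Definition in_codom (T T1 : finType) (f : T1 -> T) : pred T := fun x => x \in codom f.

Lemma pick_inj (T T1 : finType) (f : T1 -> T) x :
  injective f -> [pick x' | f x' == f x] = Some x.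
Proof.
move=> f_inj; case: pickP => [x' /eqP /f_inj -> //|h].
by have := h x; rewrite eqxx.
Qed.

Section Transport.
Variables (G : zmodType) (Dt At Dt1 At1 : finType).
Variables (eD : Dt1 -> Dt) (eA : At1 -> At).
Hypotheses (eD_inj : injective eD) (eA_inj : injective eA).

Definition pattern_push (R : pattern G Dt1 At1) : pattern G Dt At :=
  Pattern (fun x => if [pick i | eD i == x] is Some i then omap eA (mate R i) else None)
    (fun x => if [pick i | eD i == x] is Some i then dval R i else 0)
    (fun y => if [pick j | eA j == y] is Some j then aval R j else 0).

Definition pattern_pull (Q : pattern G Dt At) : pattern G Dt1 At1 :=
  Pattern (fun i => obind (fun j => [pick j' | eA j' == j]) (mate Q (eD i)))
          (fun i => dval Q (eD i)) (fun j => aval Q (eA j)).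

Lemma pattern_push_wf R :
  pattern_wf predT predT R -> pattern_wf (in_codom eD) (in_codom eA) (pattern_push R).
Proof.
move=> [_ h2]; split.
  move=> x y /codomP[i ->] /=; rewrite pick_inj //.
  by case: (mate R i) => //= j [<-]; apply: codom_f.
move=> x x' y /codomP[i ->] /codomP[i' ->] /=; rewrite !pick_inj //.
case e: (mate R i) => [j|] //=; case e': (mate R i') => [j'|] //= [<-] [/eA_inj ejj].
by rewrite (h2 i i' j) // e' ejj.
Qed.

Lemma pattern_push_fits R z :
  fits predT predT R (fun i => z.1 (eD i), fun j => z.2 (eA j)) ->
  fits (in_codom eD) (in_codom eA) (pattern_push R) z.
Proof.
move=> [g1 g2]; split.
  by move=> x /codomP[i ->] /=; rewrite !pick_inj //; have := g1 i isT; case: (mate R i).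
move=> y /codomP[j ->] h /=; rewrite pick_inj //; apply: g2 => // i _ e.
by apply: (h (eD i)); [apply: codom_f | rewrite /= pick_inj // e].
Qed.

Lemma pattern_pull_wf Q :
  pattern_wf (in_codom eD) (in_codom eA) Q -> pattern_wf predT predT (pattern_pull Q).
Proof.
move=> [h1 h2]; split => // i i' j _ _ /=.
case e: (mate Q (eD i)) => [y|] //=; case e': (mate Q (eD i')) => [y'|] //=.
case: pickP => // j1 /eqP ej1 [ej]; case: pickP => // j2 /eqP ej2 [ej'].
subst; apply: eD_inj; apply: (h2 _ _ (eA j)); rewrite ?e ?e' ?ej2 //; apply: codom_f.
Qed.

Lemma pattern_pull_fits Q z : pattern_wf (in_codom eD) (in_codom eA) Q ->
  fits (in_codom eD) (in_codom eA) Q z ->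
  fits predT predT (pattern_pull Q) (fun i => z.1 (eD i), fun j => z.2 (eA j)).
Proof.
move=> [w1 _] [g1 g2]; split.
  move=> i _ /=; have := g1 (eD i) (codom_f _ _).
  case e: (mate Q (eD i)) => [y|] //=.
  by have /codomP[j ->] := w1 _ _ (codom_f _ _) e; rewrite pick_inj.
move=> j _ h /=; apply: g2; first exact: codom_f.
by move=> x /codomP[i ->] e; apply: (h i isT); rewrite /= e /= pick_inj.
Qed.

End Transport.

Lemma sumr_neq0_witness (I : finType) (F : I -> algC) : \sum_i F i != 0 -> exists i, F i != 0.
Proof.
move=> h; apply/existsP; apply: contraR h => /existsPn h.
by apply/eqP; apply: big1 => i _; apply/eqP; have := h i; rewrite negbK.
Qed.

Lemma boolr_neq0 (b : bool) : (b%:R : algC) != 0 -> b.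
Proof. by case: b => //; rewrite eqxx. Qed.

Lemma prodr_bool (I : finType) (b : I -> bool) :
  \prod_i ((b i)%:R : algC) = ([forall i, b i])%:R.
Proof.
case: (boolP [forall i, b i]) => [/forallP h|/forallPn [i hi]].
  by apply: big1 => i _; rewrite h.
by rewrite (bigD1 i) //= (negbTE hi) mul0r.
Qed.

Definition config d m n (z : basis d m n) : ('I_m -> 'I_d) * ('I_n -> 'I_d) :=
  (fun i => z.1 i, fun j => z.2 j).

Definition pattern_supported p m n (v : vec p.+2 m n) : Prop :=
  exists Q : pattern 'I_p.+2 'I_m 'I_n,
    pattern_wf predT predT Q /\ forall z, v z != 0 -> fits predT predT Q (config z).

Section PairProjection.
Variables (p q : nat).
Local Notation d := p.+2.

Lemma Pi1E (k s a s' a' : 'I_d) : Pi1 k s a s' a' = ((s == s') && (a == a') && (a == s + k))%:R.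
Proof. by rewrite /Pi1 -val_eqE. Qed.

Lemma pair_projE (k : 'I_q -> 'I_d) (v : vec d q q) w :
  apply_op (pair_proj k) v w = [forall i, w.2 i == w.1 i + k i]%:R * v w.
Proof.
rewrite /apply_op (bigD1 w) //= big1 ?addr0.
  by rewrite /pair_proj; under eq_bigr => i _ do rewrite Pi1E !eqxx; rewrite prodr_bool.
move=> w' nw; apply/eqP; rewrite mulf_eq0; apply/orP; left.
apply: contraR nw => /prodf_neq0 h; apply/eqP.
have e i : (w.1 i == w'.1 i) && (w.2 i == w'.2 i).
  by have := h i isT; rewrite Pi1E => /boolr_neq0 /andP[/andP[-> ->]].
case: w' {h} e => w1 w2 e; case: w e => v1 v2 e.
by congr pair; apply/ffunP => i; have /andP[/eqP a /eqP b] := e i.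
Qed.

Lemma pair_proj_fixed_support (k : 'I_q -> 'I_d) (Phi : vec d q q) w :
  (forall z, apply_op (pair_proj k) Phi z = Phi z) -> Phi w != 0 ->
  forall i, w.2 i = w.1 i + k i.
Proof.
move=> hp; rewrite -hp pair_projE mulf_eq0 negb_or => /andP[/boolr_neq0 /forallP h _] i.
exact/eqP/h.
Qed.

End PairProjection.

Lemma pmap_uniq_inj (T U : eqType) (f : T -> option U) (s : seq T) : uniq s ->
  (forall x x' y, x \in s -> x' \in s -> f x = Some y -> f x' = Some y -> x = x') ->
  uniq (pmap f s).
Proof.
elim: s => //= x s IH /andP[nx us] h.
have {}IH : uniq (pmap f s) by apply: IH => // ? ? ? a b; apply: h; rewrite inE ?a ?b orbT.
case e: (f x) => [y|] //=; rewrite IH andbT mem_pmap; apply/negP => /mapP [x' x's ex'].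
have ex : x = x' by apply: (h _ _ y) (esym ex') => //; rewrite inE ?eqxx ?x's ?orbT.
by move: nx; rewrite ex x's.
Qed.

Lemma nth_pmap (T U : eqType) (f : T -> option U) (s : seq T) x0 y0 i :
  (forall x, x \in s -> f x != None) -> (i < size s)%N ->
  f (nth x0 s i) = Some (nth y0 (pmap f s) i).
Proof.
elim: s i => [|x s IH] [|i] h //=; have := h x (mem_head x s); case: (f x) => // y _ //=.
by apply: IH => x1 a; apply: h; rewrite inE a orbT.
Qed.

Lemma nth_self_inj n (s : seq 'I_n) : uniq s -> size s = n ->
  injective (fun i : 'I_n => nth i s i).
Proof.
move=> us ss i i'; rewrite /= (set_nth_default i' i) ?ss // => /eqP.
by rewrite nth_uniq ?ss // => /eqP/val_inj.
Qed.

Section PureStates.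
Variables (p m n : nat).
Local Notation d := p.+2.
Local Notation q := (minn m n).

Definition widenD (i : 'I_q) : 'I_m := widen_ord (geq_minl m n) i.
Definition widenA (i : 'I_q) : 'I_n := widen_ord (geq_minr m n) i.

Lemma permvec_extend_basisE (sg : 'S_m) (tu : 'S_n) (Phi : vec d q q) rD rA z :
  permvec sg tu (extend_basis Phi rD rA) z =
  Phi ([ffun i => z.1 (sg (widenD i))], [ffun j => z.2 (tu (widenA j))]) *
  ([forall i : 'I_m, (q <= i)%N ==> (z.1 (sg i) == rD i)] &&
   [forall j : 'I_n, (q <= j)%N ==> (z.2 (tu j) == rA j)])%:R.
Proof.
rewrite /permvec /extend_basis /=; congr (_ * _).
  by congr Phi; congr pair; apply/ffunP => i; rewrite !ffunE.
by congr (_%:R); congr andb; apply: eq_forallb => i; rewrite ffunE.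
Qed.

Definition pure_pattern (sg : 'S_m) (tu : 'S_n) (k : 'I_q -> 'I_d)
    (rD : 'I_m -> 'I_d) (rA : 'I_n -> 'I_d) : pattern 'I_d 'I_m 'I_n :=
  Pattern (fun x => omap (fun i : 'I_q => tu (widenA i))
                         (insub (val ((sg^-1)%g x))))
    (fun x => if (insub (val ((sg^-1)%g x)) : option 'I_q) is Some i then k i
              else rD ((sg^-1)%g x))
    (fun y => rA ((tu^-1)%g y)).

Lemma pure_pattern_supported (psi : vec d m n) : is_pure psi -> pattern_supported psi.
Proof.
move=> [_ [sg [tu [k [Phi [rD [rA [hp hpsi]]]]]]]].
exists (pure_pattern sg tu k rD rA); split.
  split => // x x' y _ _ /=.
  case: insubP => // i _ vi; case: insubP => // i' _ vi' /= [e] [e'].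
  have := perm_inj (etrans e (esym e')) => /(congr1 val) /= /val_inj ei; subst i'.
  have : nat_of_ord ((sg^-1)%g x) = nat_of_ord ((sg^-1)%g x') by rewrite -vi -vi'.
  by move/val_inj/perm_inj.
move=> z; rewrite hpsi permvec_extend_basisE mulf_eq0 negb_or => /andP[hPhi hfix].
have hc := pair_proj_fixed_support hp hPhi.
move: hfix => /boolr_neq0 /andP[/forallP f1 /forallP f2].
split.
  move=> x _ /=; case: insubP => [i _ vi|].
    have := hc i; rewrite !ffunE /=.
    have -> : widenD i = (sg^-1)%g x by apply: val_inj.
    by rewrite permKV.
  by rewrite -leqNgt => hq; have := f1 ((sg^-1)%g x); rewrite hq permKV => /eqP.
move=> y _ hy /=; case: (ltnP (val ((tu^-1)%g y)) q) => hq.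
  exfalso; pose i := Ordinal hq; apply: (hy (sg (widenD i)) isT).
  rewrite /= permK insubT /=; congr Some.
  by rewrite -[y in RHS](permKV tu); congr (tu _); apply: val_inj.
by have := f2 ((tu^-1)%g y); rewrite hq permKV => /eqP.
Qed.

Section PatternPure.
Variable Q : pattern 'I_d 'I_m 'I_n.
Hypothesis wQ : pattern_wf predT predT Q.

(* The mated dits and their mates are put first, so that they become the pairs
   [D_i A_i] of the definition of a pure state. *)
Definition unmated (y : 'I_n) := [forall x, mate Q x != Some y].
Definition mated_dits := [seq x <- enum 'I_m | mate Q x != None].
Definition mates := pmap (mate Q) mated_dits.
Definition dit_order :=
  mated_dits ++ [seq x <- enum 'I_m | predC (fun x => mate Q x != None) x].
Definition antidit_order := mates ++ [seq y <- enum 'I_n | unmated y].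

Lemma perm_dit_order : perm_eq dit_order (enum 'I_m).
Proof. by rewrite /dit_order /mated_dits perm_filterC. Qed.

Lemma size_dit_order : size dit_order = m.
Proof. by rewrite (perm_size perm_dit_order) size_enum_ord. Qed.

Lemma uniq_dit_order : uniq dit_order.
Proof. by rewrite (perm_uniq perm_dit_order) enum_uniq. Qed.

Lemma mated_ditsP x : x \in mated_dits -> mate Q x != None.
Proof. by rewrite mem_filter => /andP[]. Qed.

Lemma size_mates : size mates = size mated_dits.
Proof.
rewrite /mates size_pmap -[RHS]count_predT; apply: eq_in_count => x /mated_ditsP.
by case: (mate Q x).
Qed.

Lemma uniq_antidit_order : uniq antidit_order.
Proof.
rewrite cat_uniq; apply/and3P; split.
- apply: pmap_uniq_inj; first exact/filter_uniq/enum_uniq.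
  by case: wQ => _ h x x' y _ _; apply: h.
- apply/hasPn => y; rewrite mem_filter => /andP[/forallP u _].
  rewrite mem_pmap; apply/negP => /mapP [x _ e].
  by have := u x; rewrite -e eqxx.
- exact/filter_uniq/enum_uniq.
Qed.

Lemma mem_antidit_order y : y \in antidit_order.
Proof.
rewrite mem_cat; case: (boolP (unmated y)) => u; first by rewrite mem_filter u mem_enum orbT.
move: u => /forallPn [x]; rewrite negbK => /eqP e.
rewrite mem_pmap; apply/orP; left; apply/mapP; exists x => //.
by rewrite mem_filter e mem_enum.
Qed.

Lemma size_antidit_order : size antidit_order = n.
Proof.
rewrite -(card_uniqP uniq_antidit_order) -[RHS]card_ord; apply: eq_card => y.
by rewrite mem_antidit_order.
Qed.

Lemma size_mated_dits_le : (size mated_dits <= q)%N.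
Proof.
rewrite leq_min; apply/andP; split.
  by rewrite -[X in (_ <= X)%N]size_dit_order size_cat leq_addr.
by rewrite -size_mates -[X in (_ <= X)%N]size_antidit_order size_cat leq_addr.
Qed.

Definition dit_perm : 'S_m := perm (nth_self_inj uniq_dit_order size_dit_order).
Definition antidit_perm : 'S_n :=
  perm (nth_self_inj uniq_antidit_order size_antidit_order).

Lemma mate_dit_perm (i : 'I_m) (j : 'I_n) : val i = val j -> (val i < size mated_dits)%N ->
  mate Q (dit_perm i) = Some (antidit_perm j).
Proof.
move=> ij hi; rewrite !permE /dit_order /antidit_order !nth_cat hi size_mates -ij hi.
exact: nth_pmap mated_ditsP hi.
Qed.

Lemma mate_dit_perm_None (i : 'I_m) : (size mated_dits <= val i)%N ->
  mate Q (dit_perm i) = None.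
Proof.
move=> hi; rewrite permE /= /dit_order nth_cat ltnNge hi /=.
set F := filter _ _.
have hF : (val i - size mated_dits < size F)%N.
  have := size_dit_order; rewrite /dit_order size_cat -/F => e.
  rewrite ltn_subLR // e; exact: ltn_ord.
have := mem_nth i hF; rewrite mem_filter /= => /andP[].
by case: (mate Q _).
Qed.

Lemma unmated_antidit_perm (j : 'I_n) : (size mated_dits <= val j)%N ->
  unmated (antidit_perm j).
Proof.
move=> hj; rewrite permE /= /antidit_order nth_cat size_mates ltnNge hj /=.
set F := filter _ _.
have hF : (val j - size mated_dits < size F)%N.
  have := size_antidit_order; rewrite /antidit_order size_cat size_mates -/F => e.
  rewrite ltn_subLR // e; exact: ltn_ord.
by have := mem_nth j hF; rewrite mem_filter /= => /andP[].
Qed.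

Lemma unmatedP y : unmated y -> forall x, mate Q x <> Some y.
Proof. by move=> /forallP u x; apply/eqP. Qed.

(* Beyond the mated dits, [dit_perm (widenD i)] and [antidit_perm (widenA i)] both
   carry fixed values, so they can be paired with the difference of these values. *)
Definition pair_shift (i : 'I_q) : 'I_d :=
  if mate Q (dit_perm (widenD i)) == Some (antidit_perm (widenA i))
  then dval Q (dit_perm (widenD i))
  else aval Q (antidit_perm (widenA i)) - dval Q (dit_perm (widenD i)).
Definition dit_rest (i : 'I_m) : 'I_d := dval Q (dit_perm i).
Definition antidit_rest (j : 'I_n) : 'I_d := aval Q (antidit_perm j).

Definition pairs_fit (w : basis d q q) := [forall i, w.2 i == w.1 i + pair_shift i].

Definition pair_config (z : basis d m n) : basis d q q :=
  ([ffun i => z.1 (dit_perm (widenD i))], [ffun i => z.2 (antidit_perm (widenA i))]).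

Definition rest_fixed (z : basis d m n) :=
  [forall i : 'I_m, (q <= i)%N ==> (z.1 (dit_perm i) == dit_rest i)] &&
  [forall j : 'I_n, (q <= j)%N ==> (z.2 (antidit_perm j) == antidit_rest j)].

Definition extend_pairs (w : basis d q q) : basis d m n :=
  ([ffun x => if (insub (val ((dit_perm^-1)%g x)) : option 'I_q) is Some i then w.1 i
              else dit_rest ((dit_perm^-1)%g x)],
   [ffun y => if (insub (val ((antidit_perm^-1)%g y)) : option 'I_q) is Some j then w.2 j
              else antidit_rest ((antidit_perm^-1)%g y)]).

Lemma fits_pair_config z :
  fits predT predT Q (config z) -> pairs_fit (pair_config z) && rest_fixed z.
Proof.
rewrite /fits /config /= => -[g1 g2]; have mated_le i : (q <= i)%N -> (size mated_dits <= i)%N.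
  by move/(leq_trans size_mated_dits_le).
apply/and3P; split.
- apply/forallP => i; rewrite !ffunE /pair_shift.
  case: (eqVneq (mate Q (dit_perm (widenD i))) (Some (antidit_perm (widenA i)))) => [e|ne].
    by have := g1 (dit_perm (widenD i)) isT; rewrite e => ->.
  have hi : (size mated_dits <= i)%N.
    by rewrite leqNgt; apply/negP => hi; move/eqP: ne; apply; apply: mate_dit_perm.
  have := g1 (dit_perm (widenD i)) isT; rewrite (@mate_dit_perm_None (widenD i) hi) /= => ->.
  rewrite (g2 (antidit_perm (widenA i)) isT); last first.
    by move=> x _; apply/unmatedP/unmated_antidit_perm.
  by rewrite addrC subrK eqxx.
- apply/forallP => i; apply/implyP => /mated_le hi.
  by have := g1 (dit_perm i) isT; rewrite (mate_dit_perm_None hi) /= => ->.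
- apply/forallP => j; apply/implyP => /mated_le hj.
  rewrite (g2 (antidit_perm j) isT) // => x _.
  exact/unmatedP/unmated_antidit_perm.
Qed.

Lemma extend_pair_config z : rest_fixed z -> extend_pairs (pair_config z) = z.
Proof.
move=> /andP[/forallP f1 /forallP f2].
apply: injective_projections; apply/ffunP => x; rewrite /extend_pairs /= ffunE.
  case: insubP => [i _ vi|].
    rewrite ffunE -[x in RHS](permKV dit_perm); congr (z.1 (dit_perm _)); exact: val_inj.
  by rewrite -leqNgt => hq; have := f1 ((dit_perm^-1)%g x); rewrite hq permKV => /eqP.
case: insubP => [i _ vi|].
  rewrite ffunE -[x in RHS](permKV antidit_perm); congr (z.2 (antidit_perm _)); exact: val_inj.
by rewrite -leqNgt => hq; have := f2 ((antidit_perm^-1)%g x); rewrite hq permKV => /eqP.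
Qed.

Lemma pure_of_pattern (phi : vec d m n) : unit_vec phi ->
  (forall z, phi z != 0 -> fits predT predT Q (config z)) -> is_pure phi.
Proof.
move=> u hg; split => //.
pose Phi w := phi (extend_pairs w) * (pairs_fit w)%:R.
exists dit_perm, antidit_perm, pair_shift, Phi, dit_rest, antidit_rest; split.
  by move=> w; rewrite pair_projE /Phi mulrCA -natrM mulnb andbb.
move=> z; rewrite permvec_extend_basisE /Phi -/(pair_config z) -/(rest_fixed z).
case: (boolP (pairs_fit (pair_config z) && rest_fixed z)) => [/andP[c f]|h].
  by rewrite extend_pair_config // c f !mulr1.
have -> : phi z = 0 by apply/eqP; apply: contraR h => /hg; apply: fits_pair_config.
by move: h; rewrite negb_and => /orP[]/negbTE ->; rewrite ?mulr0 ?mul0r.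
Qed.

End PatternPure.

Lemma pattern_supported_pure (phi : vec d m n) :
  unit_vec phi -> pattern_supported phi -> is_pure phi.
Proof. move=> u [Q [wQ hQ]]; exact: (pure_of_pattern wQ u hQ). Qed.

End PureStates.

Lemma disjoint_injections_cover (T A B : finType) (f : A -> T) (g : B -> T) :
  injective f -> injective g -> (forall a b, f a <> g b) -> (#|T| <= #|A| + #|B|)%N ->
  forall x, (exists a, x = f a) \/ (exists b, x = g b).
Proof.
move=> f_inj g_inj fg hc x.
pose h (s : A + B) := match s with inl a => f a | inr b => g b end.
have h_inj : injective h.
  case=> [a|b] [a'|b'] //= e; first by rewrite (f_inj _ _ e).
  - by case: (fg _ _ e).
  - by case: (fg _ _ (esym e)).
  - by rewrite (g_inj _ _ e).
have hc' : (#|T| <= #|{: A + B}|)%N by rewrite card_sum.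
have /codomP [[a|b] ->] := inj_card_onto h_inj hc' x.
  by left; exists a.
by right; exists b.
Qed.

Section Normalisation.
Variables (p m n : nat).
Local Notation d := p.+2.

Definition delta_vec (x : basis d m n) : vec d m n := fun z => (z == x)%:R.

Lemma delta_vec_supported x : pattern_supported (delta_vec x).
Proof.
exists (Pattern (fun _ => None) (fun i => x.1 i) (fun j => x.2 j)); split=> // z.
rewrite /delta_vec; have [-> _|_] := eqVneq z x; last by rewrite eqxx.
by split=> [i _|j _ _].
Qed.

Definition sqnorm (v : vec d m n) : algC := \sum_z `|v z| ^+ 2.

Lemma sqnorm_ge0 v : 0 <= sqnorm v.
Proof. by apply: sumr_ge0 => z _; rewrite exprn_ge0. Qed.

Lemma sqnorm_eq0 v : sqnorm v = 0 -> forall z, v z = 0.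
Proof.
move=> h z; have := psumr_eq0P (fun z _ => exprn_ge0 2 (normr_ge0 (v z))) h (i := z) isT.
by move/eqP; rewrite expf_eq0 /= normr_eq0 => /eqP.
Qed.

Definition normalize (v : vec d m n) : vec d m n := fun z => v z / sqrtC (sqnorm v).

Lemma unit_vec_normalize v : sqnorm v != 0 -> unit_vec (normalize v).
Proof.
move=> nz; have s0 : 0 <= sqrtC (sqnorm v) by rewrite sqrtC_ge0 sqnorm_ge0.
rewrite /unit_vec /normalize; under eq_bigr => z _ do
  rewrite normrM normfV (ger0_norm s0) exprMn exprVn sqrtCK.
by rewrite -mulr_suml divff.
Qed.

Lemma outer_normalize v y y' : v y * (v y')^* = sqnorm v * outer (normalize v) y y'.
Proof.
have [h|nz] := eqVneq (sqnorm v) 0; first by rewrite h (sqnorm_eq0 h y) !mul0r.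
have s0 : 0 <= sqrtC (sqnorm v) by rewrite sqrtC_ge0 sqnorm_ge0.
have sn0 : sqrtC (sqnorm v) != 0 by rewrite sqrtC_eq0.
rewrite /outer /normalize rmorphM fmorphV /= (conj_Creal (ger0_real s0)).
set s := sqrtC _ in s0 sn0 *; have -> : sqnorm v = s ^+ 2 by rewrite /s sqrtCK.
by rewrite expr2; field.
Qed.

Lemma delta_vec_pure x : is_pure (delta_vec x).
Proof.
apply: pattern_supported_pure (delta_vec_supported x).
rewrite /unit_vec (bigD1 x) //= big1 ?addr0 /delta_vec ?eqxx ?normr1 ?expr1n //.
by move=> z /negbTE ->; rewrite normr0 expr0n.
Qed.

Section SumOuter.
Variables (T : finType) (a : T -> algC) (ch : T -> vec d m n) (sigma : op d m n).
Hypotheses (a_ge0 : forall t, 0 <= a t) (ch_supp : forall t, pattern_supported (ch t))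
  (sigmaE : forall y y', sigma y y' = \sum_t a t * (ch t y * (ch t y')^*)).

Lemma trace_sum_outer : \sum_y sigma y y = \sum_t a t * sqnorm (ch t).
Proof.
under eq_bigr => y _ do rewrite sigmaE; rewrite exchange_big.
by apply: eq_bigr => t _; rewrite mulr_sumr; apply: eq_bigr => y _; rewrite normCK.
Qed.

(* A term with [sqnorm (ch t) = 0] has weight zero, so its pure state is arbitrary. *)
Lemma sum_outer_valid_state : \sum_y sigma y y = 1 -> valid_state sigma.
Proof.
rewrite trace_sum_outer => tr1.
pose z0 : basis d m n := ([ffun=> ord0], [ffun=> ord0]).
pose psi t := if sqnorm (ch t) == 0 then delta_vec z0 else normalize (ch t).
pose w t := a t * sqnorm (ch t).
exists #|T|, (fun i => w (enum_val i)), (fun i => psi (enum_val i)).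
split; [|split; [|split]].
- by move=> i; rewrite mulr_ge0 ?sqnorm_ge0.
- by rewrite -(big_enum_val (A := T)).
- move=> i; rewrite /psi; case: eqP => [_|/eqP nz]; first exact: delta_vec_pure.
  apply: pattern_supported_pure; first exact: unit_vec_normalize.
  have [Q [wQ hQ]] := ch_supp (enum_val i); exists Q; split=> // y.
  by rewrite mulf_eq0 negb_or => /andP[/hQ].
- move=> y y'; rewrite sigmaE -(big_enum_val (A := T) (fun t => w t * outer (psi t) y y')) /=.
  apply: eq_bigr => t _; rewrite outer_normalize mulrA /w /psi; case: eqP => [-> | //].
  by rewrite !mulr0 !mul0r.
Qed.

End SumOuter.

Theorem sum_outer_state (T : finType) (a : T -> algC) (ch : T -> vec d m n) (sigma : op d m n) :
  (forall t, 0 <= a t) -> (forall t, pattern_supported (ch t)) ->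
  (forall y y', sigma y y' = \sum_t a t * (ch t y * (ch t y')^*)) ->
  (forall y y', sigma y y' = 0) \/
  (0 < \sum_y sigma y y /\ exists tau, valid_state tau /\
     forall y y', sigma y y' = (\sum_y sigma y y) * tau y y').
Proof.
move=> a_ge0 ch_supp sigmaE; set C := \sum_y sigma y y.
have term_ge0 t : 0 <= a t * sqnorm (ch t) by rewrite mulr_ge0 ?sqnorm_ge0.
have [C0|Cn0] := eqVneq C 0.
  left=> y y'; rewrite sigmaE; apply: big1 => t _.
  have := psumr_eq0P (fun t _ => term_ge0 t) (etrans (esym (trace_sum_outer sigmaE)) C0).
  move=> /(_ t isT) /eqP; rewrite mulf_eq0 => /orP[/eqP -> |/eqP/sqnorm_eq0 ch0].
    by rewrite mul0r.
  by rewrite ch0 mul0r mulr0.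
have C_gt0 : 0 < C by rewrite lt_def Cn0 /C (trace_sum_outer sigmaE) sumr_ge0.
right; split=> //; exists (fun y y' => sigma y y' / C); split; last first.
  by move=> y y'; rewrite mulrC divfK.
apply: (@sum_outer_valid_state _ (fun t => a t / C) ch).
- by move=> t; rewrite divr_ge0 // ltW.
- exact: ch_supp.
- by move=> y y'; rewrite sigmaE mulr_suml; apply: eq_bigr => t _; rewrite mulrAC.
- by rewrite -mulr_suml divff.
Qed.

End Normalisation.

Lemma sum_indicator2 (T : finType) (a b : T) :
  \sum_x (((a == x) && (b == x))%:R : algC) = (a == b)%:R.
Proof.
rewrite (bigD1 a) //= eqxx big1 ?addr0; first by rewrite eq_sym.
by move=> x /negbTE; rewrite eq_sym => ->.
Qed.

Lemma natr_and (a b : bool) : ((a && b)%:R : algC) = a%:R * b%:R.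
Proof. by rewrite -mulnb natrM. Qed.

Lemma trace_valid_state d m n (rho : op d m n) : valid_state rho -> \sum_z rho z z = 1.
Proof.
move=> [N [w [psi [_ [w1 [hpure hr]]]]]]; under eq_bigr => z _ do rewrite hr.
rewrite exchange_big /= -w1; apply: eq_bigr => i _.
have [u _] := hpure i; rewrite -[RHS]mulr1 -u mulr_sumr.
by apply: eq_bigr => z _; rewrite /outer normCK.
Qed.

Section Subsystems.
Variables (p m n m1 n1 : nat).
Local Notation d := p.+2.
Variables (eD : 'I_m1 -> 'I_m) (eA : 'I_n1 -> 'I_n)
    (cD : 'I_(m - m1) -> 'I_m) (cA : 'I_(n - n1) -> 'I_n).
Hypotheses (hm : (m1 <= m)%N) (hn : (n1 <= n)%N)
  (eD_inj : injective eD) (cD_inj : injective cD) (eD_cD : forall i j, eD i <> cD j)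
  (eA_inj : injective eA) (cA_inj : injective cA) (eA_cA : forall i j, eA i <> cA j).

Local Notation rest := (restr cD cA).
Local Notation measured := (restr eD eA).
Local Notation ptr X := (ptrace X eD eA cD cA).
Local Notation "X \ox 'I'" := (tensor_id X eD eA cD cA) (at level 40).

Lemma cover_dits x : (exists a, x = eD a) \/ (exists b, x = cD b).
Proof. by apply: disjoint_injections_cover => //; rewrite !card_ord subnKC. Qed.

Lemma cover_antidits x : (exists a, x = eA a) \/ (exists b, x = cA b).
Proof. by apply: disjoint_injections_cover => //; rewrite !card_ord subnKC. Qed.

Lemma in_codom_dits : predD predT (in_codom eD) =1 in_codom cD.
Proof.
move=> x; rewrite /= /in_codom andbT; apply/idP/idP.
  by case: (cover_dits x) => [[a ->]|[b ->]]; rewrite ?codom_f.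
by move=> /codomP [b ->]; apply/codomP => -[a /esym /eD_cD].
Qed.

Lemma in_codom_antidits : predD predT (in_codom eA) =1 in_codom cA.
Proof.
move=> x; rewrite /= /in_codom andbT; apply/idP/idP.
  by case: (cover_antidits x) => [[a ->]|[b ->]]; rewrite ?codom_f.
by move=> /codomP [b ->]; apply/codomP => -[a /esym /eA_cA].
Qed.

Lemma eq_restr (z z' : basis d m n) :
  restr cD cA z = restr cD cA z' -> restr eD eA z = restr eD eA z' -> z = z'.
Proof.
case=> e1 e2 [e3 e4]; apply: injective_projections; apply/ffunP => x.
  case: (cover_dits x) => [[a ->]|[b ->]].
    by move/ffunP: e3 => /(_ a); rewrite !ffunE.
  by move/ffunP: e1 => /(_ b); rewrite !ffunE.
case: (cover_antidits x) => [[a ->]|[b ->]].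
  by move/ffunP: e4 => /(_ a); rewrite !ffunE.
by move/ffunP: e2 => /(_ b); rewrite !ffunE.
Qed.

Definition splice (u w : basis d m n) : basis d m n :=
  ([ffun i => if i \in codom eD then w.1 i else u.1 i],
   [ffun j => if j \in codom eA then w.2 j else u.2 j]).

Lemma restr_splice_rest u w : restr cD cA (splice u w) = restr cD cA u.
Proof.
rewrite /restr /splice; congr pair; apply/ffunP => i; rewrite !ffunE.
  by case: codomP => // [[a /esym /eD_cD]].
by case: codomP => // [[a /esym /eA_cA]].
Qed.

Lemma restr_splice_measured u w : restr eD eA (splice u w) = restr eD eA w.
Proof. by rewrite /restr /splice; congr pair; apply/ffunP => i; rewrite !ffunE codom_f. Qed.

Lemma sum_restr_indicator (u w : basis d m n) :
  \sum_(z : basis d m n)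
     ((restr cD cA z == restr cD cA u) && (restr eD eA z == restr eD eA w))%:R = 1 :> algC.
Proof.
rewrite (bigD1 (splice u w)) //= restr_splice_rest restr_splice_measured !eqxx /=.
rewrite big1 ?addr0 // => z nz; case: eqP => //= e1; case: eqP => //= e2.
by case/eqP: nz; apply: eq_restr; rewrite ?restr_splice_rest ?restr_splice_measured.
Qed.

Lemma trace_ptrace (X : op d m n) : \sum_y ptr X y y = \sum_z X z z.
Proof.
rewrite /ptrace exchange_big /=; apply: eq_bigr => z _; rewrite exchange_big /=.
rewrite (bigD1 z) //= [X in _ + X]big1 ?addr0 => [|w nzw]; rewrite -mulr_suml.
  under eq_bigr => y _ do rewrite eqxx andbT.
  by rewrite sum_indicator2 eqxx mul1r.
apply/eqP; rewrite mulf_eq0; apply/orP; left; apply/eqP; apply: big1 => y _.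
case: eqP => [<-|] //=; case: eqP => [e|] //=; case: eqP => //= e'.
by case/eqP: nzw; apply: eq_restr e (esym e').
Qed.

Lemma ptrace_tensorE (X : op d m1 n1) (rho : op d m n) y y' :
  ptr (mulop (X \ox I) rho) y y' =
  \sum_u \sum_w ((rest u == y) && (rest w == y'))%:R * (X (measured w) (measured u) * rho u w).
Proof.
rewrite /ptrace /mulop /tensor_id.
under eq_bigr => z _ do under eq_bigr => w _ do rewrite mulr_sumr.
rewrite exchange_big /=; under eq_bigr => w _ do rewrite exchange_big /=.
rewrite [LHS]exchange_big /=; apply: eq_bigr => u _; apply: eq_bigr => w _.
set K := (X in _ = X).
have -> : K = K * \sum_z ((rest z == rest u) && (measured z == measured w))%:R.
  by rewrite sum_restr_indicator mulr1.
rewrite mulr_sumr; apply: eq_bigr => z _.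
case: (eqVneq (rest z) (rest u)) => [->|_]; case: (eqVneq (measured z) (measured w)) => [->|_];
  by rewrite /K ?eqxx ?andbT ?natr_and ?mulr0 ?mul0r ?mulr1 ?mul1r; ring.
Qed.

Definition contract (f : vec d m1 n1) (Psi : vec d m n) : vec d (m - m1) (n - n1) :=
  fun y => \sum_(u : basis d m n) (rest u == y)%:R * f (measured u) * Psi u.

Lemma contract_pattern_supported f Psi :
  is_pure Psi -> pattern_supported f -> pattern_supported (contract f Psi).
Proof.
move=> /pure_pattern_supported [Q [wQ hQ]] [R1 [wR1 hf]].
pose R := pattern_push eD eA R1.
have [Q' [wQ' hQ']] : eliminable R (in_codom eD) (in_codom eA) predT predT Q.
  by apply: pattern_eliminable => //; apply: pattern_push_wf eD_inj eA_inj _ wR1.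
have wQ'' : pattern_wf (in_codom cD) (in_codom cA) Q' :=
  eq_pattern_wf in_codom_dits in_codom_antidits wQ'.
exists (pattern_pull cD cA Q'); split; first exact: pattern_pull_wf.
move=> y /sumr_neq0_witness [u].
rewrite !mulf_eq0 !negb_or => /andP[/andP[/boolr_neq0/eqP ey hfu] hPu].
have gR : fits (in_codom eD) (in_codom eA) R (config u).
  by apply: (pattern_push_fits eD_inj eA_inj) (fits_ext (hf _ hfu) _ _) => ? /=; rewrite ffunE.
have gQ' : fits (in_codom cD) (in_codom cA) Q' (config u) :=
  eq_fits in_codom_dits in_codom_antidits (hQ' _ gR (hQ _ hPu)).
by apply: (fits_ext (pattern_pull_fits cA_inj wQ'' gQ')) => ? /=; rewrite -ey ffunE.
Qed.

Lemma ptrace_idE (rho : op d m n) y y' :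
  ptr rho y y' = ptr (mulop ((fun x x' => (x == x')%:R) \ox I) rho) y y'.
Proof.
rewrite ptrace_tensorE /ptrace; apply: eq_bigr => u _; apply: eq_bigr => w _.
by rewrite mulrA -natrM mulnb [measured w == _]eq_sym.
Qed.

Lemma contract_outer f Psi y y' :
  contract f Psi y * (contract f Psi y')^* =
  \sum_u \sum_w ((rest u == y)%:R * f (measured u) * Psi u) *
                ((rest w == y')%:R * (f (measured w))^* * (Psi w)^*).
Proof.
rewrite /contract rmorph_sum big_distrlr; apply: eq_bigr => u _; apply: eq_bigr => w _.
by rewrite !rmorphM /= conjC_nat.
Qed.

Lemma ptrace_outerE (T U : finType) (wt : T -> algC) (Ps : T -> vec d m n)
    (c : U -> algC) (ps : U -> vec d m1 n1) (X : op d m1 n1) (rho : op d m n) :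
  (forall x x', X x x' = \sum_j c j * outer (ps j) x x') ->
  (forall z z', rho z z' = \sum_i wt i * outer (Ps i) z z') ->
  forall y y', ptr (mulop (X \ox I) rho) y y' =
    \sum_(t : T * U) (wt t.1 * c t.2) *
      (contract (fun x => (ps t.2 x)^*) (Ps t.1) y *
       (contract (fun x => (ps t.2 x)^*) (Ps t.1) y')^*).
Proof.
move=> hX hr y y'; rewrite ptrace_tensorE.
under [RHS]eq_bigr => t _.
  by rewrite contract_outer mulr_sumr; under eq_bigr => u _ do rewrite mulr_sumr; over.
rewrite [RHS]exchange_big /=; under [RHS]eq_bigr => u _ do rewrite exchange_big /=.
apply: eq_bigr => u _; apply: eq_bigr => w _.
rewrite hX hr big_distrlr mulr_sumr; under [LHS]eq_bigr => j _ do rewrite mulr_sumr.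
rewrite exchange_big pair_bigA /=; apply: eq_bigr => t _.
by rewrite /outer natr_and conjCK; ring.
Qed.

Lemma contract_conj_supported (phi : vec d m1 n1) Psi :
  is_pure phi -> is_pure Psi -> pattern_supported (contract (fun x => (phi x)^*) Psi).
Proof.
move=> /pure_pattern_supported [Q [wQ hQ]] hPsi; apply: contract_pattern_supported hPsi _.
by exists Q; split=> // x; rewrite conjC_eq0; apply: hQ.
Qed.

Lemma ptrace_measurement_state (P : op d m1 n1) (rho : op d m n) :
  in_pure_cone P -> valid_state rho ->
  let sigma := ptr (mulop (P \ox I) rho) in
  (forall y y', sigma y y' = 0) \/
  exists c tau, 0 < c /\ valid_state tau /\ forall y y', sigma y y' = c * tau y y'.
Proof.
move=> [M [c [ps [c_ge0 [ps_pure hP]]]]] [N [wt [Ps [wt_ge0 [_ [Ps_pure hr]]]]]] sigma.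
have := sum_outer_state (a := fun t : 'I_N * 'I_M => wt t.1 * c t.2)
  (ch := fun t => contract (fun x => (ps t.2 x)^*) (Ps t.1)) (sigma := sigma).
case=> [t|t|y y'|sigma0|[? [tau ?]]].
- exact: mulr_ge0.
- exact: contract_conj_supported.
- exact: ptrace_outerE.
- by left.
- by right; exists (\sum_y sigma y y), tau.
Qed.

Lemma ptrace_state (rho : op d m n) : valid_state rho -> valid_state (ptr rho).
Proof.
move=> rho_state; have [N [wt [Ps [wt_ge0 [_ [Ps_pure hr]]]]]] := rho_state.
have id_outer (x x' : basis d m1 n1) :
    (x == x')%:R = \sum_x0 1 * outer (delta_vec x0) x x'.
  by rewrite -sum_indicator2; apply: eq_bigr => x0 _; rewrite /outer conjC_nat natr_and mul1r.
apply: (sum_outer_valid_state (a := fun t : 'I_N * basis d m1 n1 => wt t.1 * 1)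
  (ch := fun t => contract (fun x => (delta_vec t.2 x)^*) (Ps t.1))).
- by move=> t; rewrite mulr1.
- by move=> t; apply: contract_conj_supported; [apply: delta_vec_pure | apply: Ps_pure].
- by move=> y y'; rewrite ptrace_idE; apply: (ptrace_outerE id_outer hr).
- by rewrite trace_ptrace trace_valid_state.
Qed.

End Subsystems.

Lemma measurement_element_cone d m n (P : op d m n) : measurement_element P -> in_pure_cone P.
Proof.
move=> [N [Ps [i [[_ [_ cone]] hP]]]]; have [M [c [psi [? [? hPs]]]]] := cone i.
by exists M, c, psi; do 2!split=> //; move=> z z'; rewrite hP hPs.
Qed.

Theorem mainTheorem2 (d m n m1 n1 : nat) (rho : op d m n)
    (eD : 'I_m1 -> 'I_m) (eA : 'I_n1 -> 'I_n)
    (cD : 'I_(m - m1) -> 'I_m) (cA : 'I_(n - n1) -> 'I_n) :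
  (2 <= d)%N -> (m1 <= m)%N -> (n1 <= n)%N ->
  injective eD -> injective cD -> (forall i j, eD i <> cD j) ->
  injective eA -> injective cA -> (forall i j, eA i <> cA j) ->
  valid_state rho ->
  (forall P : op d m1 n1, measurement_element P ->
     let sigma := ptrace (mulop (tensor_id P eD eA cD cA) rho) eD eA cD cA in
     (forall y y', sigma y y' = 0) \/
     exists (c : algC) (tau : op d (m - m1) (n - n1)),
       0 < c /\ valid_state tau /\ forall y y', sigma y y' = c * tau y y')
  /\ valid_state (ptrace rho eD eA cD cA).
Proof.
case: d rho => [|[|p]] rho // _ hm hn eD_inj cD_inj eD_cD eA_inj cA_inj eA_cA rho_state.
split; last exact: ptrace_state.
by move=> P /measurement_element_cone P_cone; apply: ptrace_measurement_state.
Qed.
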